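(* Let $p$ be an odd prime, let $G$ be a proper multiplicative subgroup of $\mathbb{F}_p^*$ with $|G|\ge 3$, and let $\xi,\mu\in\mathbb{F}_p^*$. Then: (1) for every $A\subseteq\mathbb{F}_p^*$, we have $A/A\neq (\xi G+\mu)\setminus\{0\}$; (2) for every $A\subseteq\mathbb{F}_p^*$, we have $A/A\neq \big((\xi G\cup\{0\})+\mu\big)\setminus\{0\}$.
   Context: $\mathbb{F}_p$ is the field with $p$ elements and $\mathbb{F}_p^*=\mathbb{F}_p\setminus\{0\}$. For $A\subseteq\mathbb{F}_p^*$, the ratio set is $A/A=\{a/b: a,b\in A\}$. For a set $S\subseteq\mathbb{F}_p$, $\xi S=\{\xi s: s\in S\}$ and $S+\mu=\{s+\mu: s\in S\}$. *)

From mathcomp Require Import all_boot all_algebra.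
Set Implicit Arguments. Unset Strict Implicit. Unset Printing Implicit Defensive.
Import GRing.Theory.
Local Open Scope ring_scope.

Definition Fstar (p : nat) : {set 'F_p} := [set x : 'F_p | x != 0].

Definition is_mult_subgroup (p : nat) (G : {set 'F_p}) : Prop :=
  [/\ G \subset Fstar p, (1 : 'F_p) \in G,
      (forall x y, x \in G -> y \in G -> x * y \in G)
    & (forall x, x \in G -> x^-1 \in G)].

Definition ratio_set (p : nat) (A : {set 'F_p}) : {set 'F_p} :=
  [set a / b | a in A, b in A].

Definition dil_shift (p : nat) (xi mu : 'F_p) (S : {set 'F_p}) : {set 'F_p} :=
  [set xi * s + mu | s in S].

From mathcomp Require Import all_boot all_algebra.
From mathcomp Require Import ring zify.
Set Implicit Arguments. Unset Strict Implicit. Unset Printing Implicit Defensive.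
Import GRing.Theory.
Local Open Scope ring_scope.

(* Put n := #|G|, m := -mu and lam := xi^n.  As g^n = 1 on G, the set
   T := xi G + mu consists of the n roots of P1 := (X + m)^n - lam, and
   {mu} u T of the n + 1 roots of P2 := (X + m) P1.  A ratio set is closed
   under inversion and contains 1.  If a monic P of degree d has d distinct
   nonzero roots forming an inversion-closed set, then X^d P(1/X) = P(0) P(X),
   i.e. the coefficients satisfy P_(d-j) = P_0 P_j.
   Apply this to P1 or P2 (divided by X when 0 is a root): the coefficients
   of indices 0..3 and d-3..d are binomial multiples of powers of m, and the
   resulting equations in m, lam and n are inconsistent in characteristic
   p > n + 1, which holds because G is a proper subgroup.  The cases
   n = 3, 4 also use that 1 is a root. *)

(** * Self-reciprocal polynomials *)

(* For monic [P] of degree [n] this says [X^n P(1/X) = P(0) P(X)]. *)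
Definition self_reciprocal (R : nzRingType) n (P : {poly R}) :=
  forall j, (j <= n)%N -> P`_(n - j) = P`_0 * P`_j.

Lemma horner_reciprocal (F : fieldType) (P : {poly F}) n x :
  (size P <= n.+1)%N -> x != 0 ->
  (\poly_(i < n.+1) P`_(n - i)).[x] = x ^+ n * P.[x^-1].
Proof.
move=> szP x0; rewrite horner_poly (horner_coef_wide _ szP) mulr_sumr.
rewrite [RHS](reindex_inj rev_ord_inj); apply: eq_bigr => /= i _.
have i_le_n : (i <= n)%N by rewrite -ltnS.
have -> : x ^+ n = x ^+ i * x ^+ (n - i) by rewrite -exprD subnKC.
by rewrite subSS exprVn mulrAC -mulrA divfK ?expf_neq0 // mulrC.
Qed.

Lemma self_reciprocal_of_roots (F : fieldType) (P : {poly F}) n (s : seq F) :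
  (size P <= n.+1)%N -> P`_n = 1 -> uniq s -> size s = n -> 0 \notin s ->
  {in s, forall x, x^-1 \in s} -> {in s, forall x, root P x} -> self_reciprocal n P.
Proof.
move=> szP Pn1 s_uniq sz_s s0 s_inv s_roots.
set D := \poly_(i < n.+1) P`_(n - i) - P`_0 *: P.
have D0 : D = 0.
  apply: (roots_geq_poly_eq0 (rs := s)) => //.
  - apply/allP => x xs; have x0 : x != 0 by apply: contraNneq s0 => <-.
    rewrite /root hornerD hornerN hornerZ horner_reciprocal //.
    by rewrite (eqP (s_roots _ (s_inv _ xs))) (eqP (s_roots _ xs)) !mulr0 subr0.
  - apply/leq_sizeP => i; rewrite sz_s coefB coef_poly coefZ ltnS leq_eqVlt.
    case/orP => [/eqP <- | n_lt_i]; first by rewrite leqnn subnn Pn1 mulr1 subrr.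
    by rewrite leqNgt n_lt_i /= (nth_default 0 (leq_trans szP n_lt_i)) mulr0 subr0.
move=> j j_le_n; apply/eqP; rewrite -subr_eq0.
by have /polyP/(_ j) := D0; rewrite coefB coef_poly coefZ ltnS j_le_n coef0 => ->.
Qed.

Lemma self_reciprocal_of_set_roots (F : finFieldType) (X : {set F}) (P : {poly F}) n :
  #|X| = n -> 0 \notin X -> invr_closed X ->
  (size P <= n.+1)%N -> P`_n = 1 -> {in X, forall x, root P x} -> self_reciprocal n P.
Proof.
move=> cardX X0 Xinv szP Pn1 Xroots; apply: (self_reciprocal_of_roots (s := enum X)) => //.
- exact: enum_uniq.
- by rewrite -cardE.
- by rewrite mem_enum.
- by move=> x; rewrite !mem_enum; apply: Xinv.
- by move=> x; rewrite mem_enum; apply: Xroots.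
Qed.

Lemma root_drop_poly1 (R : idomainType) (p : {poly R}) x : root p 0 -> x != 0 ->
  root (drop_poly 1 p) x = root p x.
Proof.
move=> /eqP p0 x0; rewrite -{2}(poly_take_drop 1 p).
have -> : take_poly 1 p = 0.
  by apply/polyP => -[|i]; rewrite coef_take_poly coef0 // -horner_coef0.
by rewrite add0r rootM expr1 rootX (negbTE x0) orbF.
Qed.

Lemma coef_drop_poly1_sub (R : nzRingType) (p : {poly R}) n j : (j < n)%N ->
  (drop_poly 1 p)`_(n.-1 - j) = p`_(n - j).
Proof. by move=> j_lt_n; rewrite coef_drop_poly; congr (_`_ _); lia. Qed.

Lemma coef_XaddC_exp (R : comNzRingType) (c : R) n i :
  (('X + c%:P) ^+ n)`_i = 'C(n, i)%:R * c ^+ (n - i).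
Proof.
have -> : ('X + c%:P) ^+ n = \poly_(i < n.+1) ('C(n, i)%:R * c ^+ (n - i)).
  rewrite addrC exprDn poly_def; apply: eq_bigr => j _.
  by rewrite -rmorphXn /= mul_polyC mulr_natl scalerMnl.
by rewrite coef_poly; case: ltnP => // /bin_small ->; rewrite mul0r.
Qed.

Lemma coef_XaddC_exp_sub (R : comNzRingType) (c : R) n j : (j <= n)%N ->
  (('X + c%:P) ^+ n)`_(n - j) = 'C(n, j)%:R * c ^+ j.
Proof. by move=> j_le_n; rewrite coef_XaddC_exp bin_sub // subKn. Qed.

Lemma natr_bin_neq0 (R : idomainType) n j :
  (forall i, (0 < i <= n)%N -> i%:R != 0 :> R) -> (j <= n)%N -> 'C(n, j)%:R != 0 :> R.
Proof.
move=> natr_neq0 j_le_n.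
have : ('C(n, j) * j`!)%:R != 0 :> R.
  rewrite bin_ffact ffact_prod natr_prod; apply/prodf_neq0 => i _.
  by apply: natr_neq0; have := ltn_ord i; lia.
by rewrite natrM mulf_eq0 negb_or => /andP [].
Qed.

Lemma mulr2_bin2 (R : nzRingType) n : 2%:R * 'C(n, 2)%:R = n%:R * (n%:R - 1) :> R.
Proof.
rewrite -natrM mulnC bin_ffact ffactnS ffactn1 natrM.
by case: n => [|n]; rewrite ?mul0r // -natr1 addrK.
Qed.

Lemma mulr6_bin3 (R : nzRingType) n :
  6%:R * 'C(n, 3)%:R = n%:R * (n%:R - 1) * (n%:R - 2%:R) :> R.
Proof.
rewrite -natrM mulnC bin_ffact !ffactnS ffactn0 muln1 !natrM mulrA.
case: n => [|[|n]]; rewrite ?mul0r ?subrr ?mulr0 ?mul0r //=.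
have -> : n.+2%:R - 2%:R = n%:R :> R by rewrite -addn2 natrD addrK.
by rewrite -natr1 addrK.
Qed.

(** * The polynomials [(X + m)^n - lam] and [(X + m)^(n+1) - lam (X + m)] *)

Section ShiftedPowerPolynomials.

Variables (F : fieldType) (n : nat) (m lam : F).
Hypotheses (n_gt2 : (2 < n)%N) (natr_neq0 : forall i, (0 < i <= n.+1)%N -> i%:R != 0 :> F)
  (m_neq0 : m != 0) (lam_neq0 : lam != 0).

Local Notation P1 := (('X + m%:P) ^+ n - lam%:P).
Local Notation P2 := (('X + m%:P) ^+ n.+1 - lam *: ('X + m%:P)).
(* Writing [m ^+ (n - j)] as [m ^+ (3 - j) * q] leaves only constant exponents. *)
Local Notation q := (m ^+ (n - 3)).

Lemma binr_neq0 N j : (N <= n.+1)%N -> (j <= N)%N -> 'C(N, j)%:R != 0 :> F.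
Proof.
move=> N_le j_le; apply: natr_bin_neq0 => // i /andP [i_gt0 i_le].
by rewrite natr_neq0 // i_gt0 (leq_trans i_le).
Qed.

Lemma subr_natr_eq0 i : (i <= n.+1)%N -> (n%:R - i%:R == 0 :> F) = (n == i).
Proof.
move=> i_le; rewrite subr_eq0; apply/eqP/eqP => [e | -> //].
case: (ltngtP n i) => // lt.
  have : (i - n)%:R != 0 :> F by apply: natr_neq0; lia.
  by rewrite natrB ?(ltnW lt) // e subrr eqxx.
have : (n - i)%:R != 0 :> F by apply: natr_neq0; lia.
by rewrite natrB ?(ltnW lt) // e subrr eqxx.
Qed.

Lemma expr_n : m ^+ n = m ^+ 3 * q.
Proof. by rewrite -exprD subnKC // ltnW. Qed.

Lemma expr_subn3 j : (j <= 3)%N -> m ^+ (n - j) = m ^+ (3 - j) * q.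
Proof. by move=> j_le3; rewrite -exprD; congr (_ ^+ _); lia. Qed.

Lemma exprS_subn4 j : (j <= 4)%N -> m ^+ (n.+1 - j) = m ^+ (4 - j) * q.
Proof. by move=> j_le4; rewrite -exprD; congr (_ ^+ _); lia. Qed.

Lemma coef_P1 i : P1`_i = 'C(n, i)%:R * m ^+ (n - i) - (if i == 0%N then lam else 0).
Proof. by rewrite coefB coef_XaddC_exp (coefC lam i). Qed.

Lemma size_P1 : (size P1 <= n.+1)%N.
Proof.
apply/leq_sizeP => j j_gt; rewrite coef_P1 bin_small // mul0r gtn_eqF ?subr0 //.
exact: leq_trans j_gt.
Qed.

Lemma coef_P1_lead : P1`_n = 1.
Proof. by rewrite coef_P1 binn subnn mulr1 gtn_eqF ?subr0 // ltnW // ltnW. Qed.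

Lemma coef_P1_0 : P1`_0 = m ^+ 3 * q - lam.
Proof. by rewrite coef_P1 expr_subn3 // bin0 mul1r. Qed.

Lemma coef_P1_low j : (0 < j <= 3)%N -> P1`_j = 'C(n, j)%:R * (m ^+ (3 - j) * q).
Proof.
by case/andP => j_gt0 j_le3; rewrite coef_P1 expr_subn3 // -[j]prednK //= subr0.
Qed.

Lemma coef_P1_sub j : (0 < j < n)%N -> P1`_(n - j) = 'C(n, j)%:R * m ^+ j.
Proof.
move=> /andP [j_gt0 j_lt_n].
by rewrite coefB (coef_XaddC_exp_sub m (ltnW j_lt_n)) (coefC lam) subn_eq0 leqNgt j_lt_n subr0.
Qed.

Lemma P1_not_self_reciprocal : ~ self_reciprocal n P1.
Proof.
move=> rec.
have R1 := rec 1%N (ltnW (ltnW n_gt2)).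
rewrite coef_P1_sub ?(ltnW n_gt2) // coef_P1_0 coef_P1_low // bin1 expr1 in R1.
have R2 := rec 2%N (ltnW n_gt2).
rewrite coef_P1_sub ?n_gt2 // coef_P1_0 coef_P1_low // in R2.
set c0 := m ^+ 3 * q - lam in R1 R2.
have nm_neq0 : n%:R * m != 0 by rewrite mulf_neq0 // natr_neq0 //; lia.
have c0mq : c0 * (m * q) = 1.
  by apply: (mulfI nm_neq0); rewrite mulr1 [RHS]R1; ring.
have m2 : m ^+ 2 = 1.
  have : 'C(n, 2)%:R * m ^+ 2 = 'C(n, 2)%:R * (c0 * (m * q)) by rewrite R2; ring.
  by rewrite c0mq => /(mulfI (binr_neq0 (leqnSn n) (ltnW n_gt2))).
have q2 : q ^+ 2 = 1 by rewrite -exprM mulnC exprM m2 expr1n.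
have : lam * (m * q) = 0.
  transitivity ((m ^+ 2) ^+ 2 * q ^+ 2 - c0 * (m * q)); first by rewrite /c0; ring.
  by rewrite m2 q2 c0mq expr1n mul1r subrr.
by apply/eqP; rewrite !mulf_neq0 // expf_neq0.
Qed.

Lemma P1_drop_reciprocal_relations : lam = m ^+ n ->
  self_reciprocal n.-1 (drop_poly 1 P1) ->
  let c0 := n%:R * (m ^+ 2 * q) in
  [/\ 1 = c0 * c0, n%:R * m = c0 * ('C(n, 2)%:R * (m * q))
    & 'C(n, 2)%:R * m ^+ 2 = c0 * ('C(n, 3)%:R * q)].
Proof.
move=> lam_eq rec c0.
have Q0 : (drop_poly 1 P1)`_0 = c0 by rewrite coef_drop_poly coef_P1_low // bin1.
have rel j : (j < n)%N -> P1`_(n - j) = c0 * P1`_j.+1.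
  by move=> j_lt_n; rewrite -coef_drop_poly1_sub // rec -?Q0 ?coef_drop_poly ?addn1 //; lia.
have := rel 0%N (ltnW (ltnW n_gt2)); rewrite subn0 coef_P1_lead coef_P1_low // bin1 => R0.
have := rel 1%N (ltnW n_gt2); rewrite coef_P1_sub ?coef_P1_low ?(ltnW n_gt2) // bin1 expr1 => R1.
have := rel 2%N n_gt2; rewrite coef_P1_sub ?coef_P1_low ?n_gt2 // subnn mul1r => R2.
by split.
Qed.

Lemma P1_drop_self_reciprocal_eq3 : lam = m ^+ n ->
  self_reciprocal n.-1 (drop_poly 1 P1) -> n = 3.
Proof.
move=> lam_eq /(P1_drop_reciprocal_relations lam_eq) [R0 R1 R2].
have nm_neq0 : n%:R * m != 0 by rewrite mulf_neq0 // natr_neq0 //; lia.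
have mq_neq0 : m ^+ 2 * q ^+ 2 != 0 by rewrite mulf_neq0 // expf_neq0 // expf_neq0.
have s1 : 'C(n, 2)%:R * (m ^+ 2 * q ^+ 2) = 1.
  by apply: (mulfI nm_neq0); rewrite mulr1 [RHS]R1; ring.
have s2 : 'C(n, 2)%:R = n%:R ^+ 2 * m ^+ 2.
  by apply: (mulIf mq_neq0); rewrite s1 [LHS]R0; ring.
have s3 : 'C(n, 2)%:R = n%:R * 'C(n, 3)%:R * q ^+ 2.
  by apply: (mulIf (expf_neq0 2 m_neq0)); rewrite [LHS]R2; ring.
have s4 : 'C(n, 2)%:R ^+ 3 = n%:R ^+ 3 * 'C(n, 3)%:R :> F.
  transitivity (n%:R ^+ 2 * m ^+ 2 * (n%:R * 'C(n, 3)%:R * q ^+ 2) * 'C(n, 2)%:R : F).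
    by rewrite -s2 -s3; ring.
  by transitivity (n%:R ^+ 3 * 'C(n, 3)%:R * ('C(n, 2)%:R * (m ^+ 2 * q ^+ 2)) : F);
    [ring | rewrite s1 mulr1].
have : 2%:R * n%:R ^+ 3 * (n%:R - 1%:R) * (n%:R - 3%:R) * n.+1%:R = 0 :> F.
  transitivity (8%:R * n%:R ^+ 3 * (6%:R * 'C(n, 3)%:R) - 6%:R * (2%:R * 'C(n, 2)%:R) ^+ 3 : F).
    by rewrite mulr6_bin3 mulr2_bin2; ring.
  by transitivity (48%:R * (n%:R ^+ 3 * 'C(n, 3)%:R - 'C(n, 2)%:R ^+ 3) : F);
    [ring | rewrite s4 subrr mulr0].
by move/eqP; rewrite !mulf_eq0 !(negbTE (natr_neq0 _)) ?subr_natr_eq0 //=; lia.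
Qed.

Lemma P1_drop_not_self_reciprocal : lam = m ^+ n -> root P1 1 ->
  ~ self_reciprocal n.-1 (drop_poly 1 P1).
Proof.
move=> lam_eq P1_1 rec.
have n3 := P1_drop_self_reciprocal_eq3 lam_eq rec.
have [_ R1 _] := P1_drop_reciprocal_relations lam_eq rec.
rewrite n3 subnn (_ : 'C(3, 2) = 3)%N // in R1.
move: P1_1; rewrite /root !hornerE lam_eq n3 => /eqP S0.
have E0 : 3%:R * m ^+ 2 - 1 = 0.
  have m3_neq0 : 3%:R * m != 0 by rewrite mulf_neq0 // natr_neq0 //; lia.
  by apply: (mulfI m3_neq0); rewrite mulr0 mulrBr mulr1 [X in _ - X]R1; ring.
(* [(1 + m)^3 - m^3 - (3 m^2 - 1) = 3 m + 2] *)
have : (1 : F) = 0.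
  transitivity (- ((1 + m) ^+ 3 - m ^+ 3 - (3%:R * m ^+ 2 - 1)) ^+ 2
                + 4%:R * ((1 + m) ^+ 3 - m ^+ 3 - (3%:R * m ^+ 2 - 1))
                + 3%:R * (3%:R * m ^+ 2 - 1)).
    by ring.
  by rewrite S0 E0; ring.
by move/eqP; rewrite oner_eq0.
Qed.

Lemma coef_P2 i : P2`_i =
  'C(n.+1, i)%:R * m ^+ (n.+1 - i) - lam * ((i == 1%N)%:R + (if i == 0%N then m else 0)).
Proof. by rewrite coefB (coef_XaddC_exp m n.+1 i) coefZ coefD coefX (coefC m i). Qed.

Lemma size_P2 : (size P2 <= n.+2)%N.
Proof.
apply/leq_sizeP => j j_gt; rewrite coef_P2 bin_small // mul0r !gtn_eqF ?addr0 ?mulr0 ?subr0 //.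
  exact: leq_trans j_gt.
exact: leq_trans j_gt.
Qed.

Lemma coef_P2_lead : P2`_n.+1 = 1.
Proof. by rewrite coef_P2 binn subnn mulr1 !gtn_eqF ?addr0 ?mulr0 ?subr0 //; lia. Qed.

Lemma coef_P2_0 : P2`_0 = m ^+ 4 * q - lam * m.
Proof. by rewrite coef_P2 exprS_subn4 // bin0 mul1r add0r. Qed.

Lemma coef_P2_1 : P2`_1 = n.+1%:R * (m ^+ 3 * q) - lam.
Proof. by rewrite coef_P2 exprS_subn4 // bin1 addr0 mulr1. Qed.

Lemma coef_P2_low j : (1 < j <= 4)%N -> P2`_j = 'C(n.+1, j)%:R * (m ^+ (4 - j) * q).
Proof.
case/andP => j_gt1 j_le4; rewrite coef_P2 exprS_subn4 // gtn_eqF // gtn_eqF ?(ltnW j_gt1) //.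
by rewrite addr0 mulr0 subr0.
Qed.

Lemma coef_P2_sub j : (0 < j < n)%N -> P2`_(n.+1 - j) = 'C(n.+1, j)%:R * m ^+ j.
Proof.
move=> /andP [j_gt0 j_lt_n]; rewrite coefB (coef_XaddC_exp_sub m (ltnW (leqW j_lt_n))).
by rewrite coefZ coefD coefX (coefC m) !gtn_eqF ?addr0 ?mulr0 ?subr0 //; lia.
Qed.

Lemma P2_reciprocal_relations : self_reciprocal n.+1 P2 ->
  let c0 := m ^+ 4 * q - lam * m in
  [/\ 1 = c0 * c0, n.+1%:R * m = c0 * (n.+1%:R * (m ^+ 3 * q) - lam),
      'C(n.+1, 2)%:R * m ^+ 2 = c0 * ('C(n.+1, 2)%:R * (m ^+ 2 * q))
    & (3 < n)%N -> 'C(n.+1, 3)%:R * m ^+ 3 = c0 * ('C(n.+1, 3)%:R * (m * q))].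
Proof.
move=> rec c0.
have rel j : (j <= n)%N -> P2`_(n.+1 - j) = c0 * P2`_j.
  by move=> /leqW /rec; rewrite coef_P2_0.
have R0 := rel 0%N isT; rewrite subn0 coef_P2_lead coef_P2_0 in R0.
have R1 := rel 1%N (ltnW (ltnW n_gt2)).
rewrite coef_P2_sub ?coef_P2_1 ?bin1 ?expr1 // in R1; last lia.
have R2 := rel 2%N (ltnW n_gt2); rewrite coef_P2_sub ?coef_P2_low // in R2.
split=> // n_gt3; have R3 := rel 3%N (ltnW n_gt3).
by rewrite coef_P2_sub ?coef_P2_low // in R3.
Qed.

Lemma P2_not_self_reciprocal_gt3 : (3 < n)%N -> ~ self_reciprocal n.+1 P2.
Proof.
move=> n_gt3 /P2_reciprocal_relations [R0 _ R2 /(_ n_gt3) R3].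
set c0 := m ^+ 4 * q - lam * m in R0 R2 R3.
have C2m_neq0 : 'C(n.+1, 2)%:R * m ^+ 2 != 0 by rewrite mulf_neq0 ?binr_neq0 ?expf_neq0 //; lia.
have C3m_neq0 : 'C(n.+1, 3)%:R * m != 0 by rewrite mulf_neq0 ?binr_neq0 //; lia.
have c0q : c0 * q = 1 by apply: (mulfI C2m_neq0); rewrite mulr1 [RHS]R2; ring.
have m2 : m ^+ 2 = 1.
  have : 'C(n.+1, 3)%:R * m * m ^+ 2 = 'C(n.+1, 3)%:R * m * (c0 * q).
    by transitivity ('C(n.+1, 3)%:R * m ^+ 3 : F); [ring | rewrite R3; ring].
  by rewrite c0q => /(mulfI C3m_neq0).
have c0_eq_q : c0 = q.
  have c0_neq0 : c0 != 0 by apply: contra_eq_neq c0q => ->; rewrite mul0r eq_sym oner_neq0.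
  by apply: (mulfI c0_neq0); rewrite -R0 c0q.
have : lam * m = 0.
  transitivity ((m ^+ 2) ^+ 2 * q - c0); first by rewrite /c0; ring.
  by rewrite m2 c0_eq_q expr1n mul1r subrr.
by apply/eqP; rewrite mulf_neq0.
Qed.

Lemma P2_not_self_reciprocal_eq3 : n = 3 -> root P2 1 -> ~ self_reciprocal n.+1 P2.
Proof.
move=> n3 P2_1 /P2_reciprocal_relations [_ R1 R2 _].
have C2m_neq0 : 'C(n.+1, 2)%:R * m ^+ 2 != 0 by rewrite mulf_neq0 ?binr_neq0 ?expf_neq0 //; lia.
have two_neq0 : 2%:R != 0 :> F by rewrite natr_neq0 //; lia.
have three_neq0 : 3%:R != 0 :> F by rewrite natr_neq0 //; lia.
rewrite n3 subnn in R1 R2 C2m_neq0.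
set c0 := m ^+ 4 * m ^+ 0 - lam * m in R1 R2.
move: P2_1; rewrite /root !hornerE n3 => /eqP S0.
have c0_1 : c0 = 1 by apply: (mulIf C2m_neq0); rewrite mul1r [RHS]R2; ring.
have lam_eq : lam = 4%:R * m ^+ 3 - 4%:R * m.
  by move: R1; rewrite c0_1 mul1r => R1; rewrite R1; ring.
have m1_neq0 : m + 1 != 0.
  apply: contra_neq lam_neq0 => m1; rewrite lam_eq.
  have -> : m = -1 by apply/eqP; rewrite -addr_eq0 m1.
  by ring.
have u0 : 3%:R * m + 1 = 0.
  have : 2%:R * (3%:R * m + 1) * (m + 1) = 0.
    transitivity ((1 + m) ^+ 4 - lam * (1 + m) - (c0 - 1)); first by rewrite /c0 lam_eq; ring.
    by rewrite S0 c0_1 subrr subr0.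
  by move/eqP; rewrite !mulf_eq0 (negbTE m1_neq0) (negbTE two_neq0) orbF => /eqP.
(* after eliminating [lam], [81 (c0 - 1) = - 3 (3 m)^4 + 36 (3 m)^2 - 81] *)
have : 2%:R ^+ 4 * 3%:R = 0 :> F.
  transitivity (- 81%:R * (c0 - 1) + (3%:R * m + 1) * (- 3%:R * (3%:R * m) ^+ 3
                + 3%:R * (3%:R * m) ^+ 2 + 33%:R * (3%:R * m) - 33%:R)).
    by rewrite /c0 lam_eq; ring.
  by rewrite c0_1 u0 subrr; ring.
by apply/eqP; rewrite mulf_neq0 // expf_neq0.
Qed.

Lemma P2_not_self_reciprocal : root P2 1 -> ~ self_reciprocal n.+1 P2.
Proof.
have [n3 | n_gt3] : n = 3 \/ (3 < n)%N by lia.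
  exact: P2_not_self_reciprocal_eq3.
by move=> _; apply: P2_not_self_reciprocal_gt3.
Qed.

Lemma P2_drop_reciprocal_relations : lam = m ^+ n ->
  self_reciprocal n (drop_poly 1 P2) ->
  let c0 := n%:R * (m ^+ 3 * q) in
  [/\ 1 = c0 * c0, n.+1%:R * m = c0 * ('C(n.+1, 2)%:R * (m ^+ 2 * q))
    & 'C(n.+1, 2)%:R * m ^+ 2 = c0 * ('C(n.+1, 3)%:R * (m * q))].
Proof.
move=> lam_eq rec c0.
have P2_1 : P2`_1 = c0.
  by rewrite coef_P2_1 lam_eq expr_n -natr1 mulrDl mul1r addrK.
have rel j : (j < n.+1)%N -> P2`_(n.+1 - j) = c0 * P2`_j.+1.
  by move=> j_lt; rewrite -coef_drop_poly1_sub //= rec ?coef_drop_poly ?addn1 ?P2_1.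
have R0 := rel 0%N isT; rewrite subn0 coef_P2_lead P2_1 in R0.
have R1 := rel 1%N (leqW (ltnW n_gt2)).
rewrite coef_P2_sub ?coef_P2_low ?bin1 ?expr1 // in R1; last lia.
have R2 := rel 2%N (leqW n_gt2).
by rewrite coef_P2_sub ?coef_P2_low in R2.
Qed.

Lemma P2_drop_self_reciprocal_eq4 : lam = m ^+ n ->
  self_reciprocal n (drop_poly 1 P2) -> 2%:R * m ^+ 2 = 1 /\ n = 4.
Proof.
move=> lam_eq /(P2_drop_reciprocal_relations lam_eq) [R0 R1 R2].
have n_neq0 : n%:R != 0 :> F by rewrite natr_neq0 //; lia.
have n1_neq0 : n.+1%:R != 0 :> F by rewrite natr_neq0 //= leqnn.
have s1 : n%:R ^+ 2 * m ^+ 4 * q ^+ 2 = 2%:R.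
  apply: (mulfI (mulf_neq0 n1_neq0 m_neq0)); symmetry.
  transitivity (n%:R * (m ^+ 3 * q) * (2%:R * 'C(n.+1, 2)%:R) * (m ^+ 2 * q)).
    by rewrite R1; ring.
  by rewrite mulr2_bin2; ring.
have s2 : 2%:R * m ^+ 2 = 1 by rewrite -s1 [RHS]R0; ring.
have s3 : n%:R * (n%:R - 1) * m ^+ 2 * q ^+ 2 = 3%:R.
  apply: (mulfI (mulf_neq0 (mulf_neq0 n1_neq0 n_neq0) (expf_neq0 2 m_neq0))); symmetry.
  transitivity (3%:R * (2%:R * 'C(n.+1, 2)%:R * m ^+ 2)); first by rewrite mulr2_bin2; ring.
  transitivity (n%:R * (m ^+ 3 * q) * (6%:R * 'C(n.+1, 3)%:R) * (m * q)).
    by rewrite -mulrA R2; ring.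
  by rewrite mulr6_bin3; ring.
have s4 : n%:R ^+ 2 * m ^+ 2 * q ^+ 2 = 4%:R.
  transitivity (n%:R ^+ 2 * m ^+ 2 * q ^+ 2 * (2%:R * m ^+ 2)); first by rewrite s2 mulr1.
  by transitivity (2%:R * (n%:R ^+ 2 * m ^+ 4 * q ^+ 2)); [ring | rewrite s1; ring].
have n4 : n%:R - 4%:R = 0 :> F.
  transitivity ((n%:R - 1) * (n%:R ^+ 2 * m ^+ 2 * q ^+ 2)
                - n%:R * (n%:R * (n%:R - 1) * m ^+ 2 * q ^+ 2)).
    by rewrite s3 s4; ring.
  by ring.
by split=> //; apply/eqP; rewrite -subr_natr_eq0 ?n4 //; lia.
Qed.

Lemma P2_drop_not_self_reciprocal : lam = m ^+ n -> root P2 1 ->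
  ~ self_reciprocal n (drop_poly 1 P2).
Proof.
move=> lam_eq P2_1 /(P2_drop_self_reciprocal_eq4 lam_eq) [E n4].
move: P2_1; rewrite /root !hornerE lam_eq n4 => /eqP S0.
(* [10 m + 7] is the remainder of [P2(1)] modulo [2 m^2 - 1] *)
have : (1 : F) = 0.
  transitivity (((1 + m) ^+ 5 - m ^+ 4 * (1 + m)
      - (2%:R * m ^+ 2 - 1) * (2%:R * m ^+ 2 + 5%:R * m + 6%:R)) * (10%:R * m - 7%:R)
      - 50%:R * (2%:R * m ^+ 2 - 1)).
    by ring.
  by rewrite S0 E subrr; ring.
by move/eqP; rewrite oner_eq0.
Qed.

End ShiftedPowerPolynomials.

(** * Inversion-closed subsets of root sets *)

Section ShiftedRootSets.

Variables (F : finFieldType) (n : nat) (m lam : F) (T : {set F}).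
Hypotheses (n_gt2 : (2 < n)%N) (natr_neq0 : forall i, (0 < i <= n.+1)%N -> i%:R != 0 :> F)
  (m_neq0 : m != 0) (lam_neq0 : lam != 0) (card_T : #|T| = n)
  (T_roots : {in T, forall t, (t + m) ^+ n = lam}).

Local Notation P1 := (('X + m%:P) ^+ n - lam%:P).
Local Notation P2 := (('X + m%:P) ^+ n.+1 - lam *: ('X + m%:P)).

Lemma root_P1 x : root P1 x = ((x + m) ^+ n == lam).
Proof. by rewrite /root !hornerE subr_eq0. Qed.

Lemma root_P2 x : root P2 x = (x == - m) || ((x + m) ^+ n == lam).
Proof.
by rewrite /root !hornerE exprS [lam * _]mulrC -mulrBr mulf_eq0 addr_eq0 subr_eq0.
Qed.

Lemma T_roots_P1 : {in T, forall x, root P1 x}.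
Proof. by move=> x /T_roots; rewrite root_P1 => ->. Qed.

Lemma T_roots_P2 : {in - m |: T, forall x, root P2 x}.
Proof.
by move=> x /setU1P [-> | /T_roots]; rewrite root_P2 ?eqxx // => ->; rewrite eqxx orbT.
Qed.

Lemma lam_eq_of_0 : 0 \in T -> lam = m ^+ n.
Proof. by move/T_roots; rewrite add0r. Qed.

Lemma negm_notin_T : - m \notin T.
Proof.
apply/negP => /T_roots; rewrite addNr expr0n (gtn_eqF (ltnW (ltnW n_gt2))) => lam0.
by move: lam_neq0; rewrite -lam0 eqxx.
Qed.

Lemma shifted_roots_D1_neq0 : T :\ 0 != set0.
Proof.
have := cardsD1 0 T; rewrite card_T => n_eq.
rewrite -card_gt0 -(ltn_add2l (0 \in T)) addn0 -n_eq.
exact: leq_ltn_trans (leq_b1 _) (ltnW n_gt2).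
Qed.

Lemma shifted_roots_not_invr_closed : 1 \in T :\ 0 -> ~ invr_closed (T :\ 0).
Proof.
move=> one_in Xinv.
have X0 : 0 \notin T :\ 0 by rewrite setD11.
have P1_X : {in T :\ 0, forall x, root P1 x} by move=> x /setD1P [_ /T_roots_P1].
have := cardsD1 0 T; rewrite card_T.
case: (boolP (0 \in T)) => T0 cardX.
  have cardX' : #|T :\ 0| = n.-1 by rewrite cardX.
  have Q_size : (size (drop_poly 1 P1) <= n.-1.+1)%N.
    by rewrite size_drop_poly (prednK (ltnW (ltnW n_gt2))) leq_subLR size_P1.
  have Q_lead : (drop_poly 1 P1)`_n.-1 = 1.
    by rewrite coef_drop_poly addn1 prednK ?coef_P1_lead // ltnW // ltnW.
  have Q_roots : {in T :\ 0, forall x, root (drop_poly 1 P1) x}.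
    move=> x x_in; rewrite root_drop_poly1 ?(T_roots_P1 T0) ?P1_X //.
    by case/setD1P: x_in.
  apply: (@P1_drop_not_self_reciprocal F n m lam) (lam_eq_of_0 T0) (P1_X 1 one_in) _ => //.
  exact: self_reciprocal_of_set_roots cardX' X0 Xinv Q_size Q_lead Q_roots.
apply: (@P1_not_self_reciprocal F n m lam) => //.
apply: self_reciprocal_of_set_roots (esym cardX) X0 Xinv (size_P1 n m lam) _ P1_X.
exact: coef_P1_lead.
Qed.

Lemma shifted_roots_U1_not_invr_closed :
  1 \in (- m |: T) :\ 0 -> ~ invr_closed ((- m |: T) :\ 0).
Proof.
move=> one_in Xinv.
have X0 : 0 \notin (- m |: T) :\ 0 by rewrite setD11.
have P2_X : {in (- m |: T) :\ 0, forall x, root P2 x}.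
  by move=> x /setD1P [_ /T_roots_P2].
have := cardsD1 0 (- m |: T).
rewrite cardsU1 negm_notin_T card_T in_setU1 eq_sym oppr_eq0 (negbTE m_neq0) /=.
case: (boolP (0 \in T)) => T0 cardX.
  have {}cardX : #|(- m |: T) :\ 0| = n by case: cardX.
  have Q_size : (size (drop_poly 1 P2) <= n.+1)%N.
    by rewrite size_drop_poly leq_subLR size_P2.
  have Q_lead : (drop_poly 1 P2)`_n = 1 by rewrite coef_drop_poly addn1 coef_P2_lead.
  have Q_roots : {in (- m |: T) :\ 0, forall x, root (drop_poly 1 P2) x}.
    move=> x x_in; rewrite root_drop_poly1 ?(T_roots_P2 (setU1r _ T0)) ?P2_X //.
    by case/setD1P: x_in.
  apply: (@P2_drop_not_self_reciprocal F n m lam) (lam_eq_of_0 T0) (P2_X 1 one_in) _ => //.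
  exact: self_reciprocal_of_set_roots cardX X0 Xinv Q_size Q_lead Q_roots.
apply: (@P2_not_self_reciprocal F n m lam) (P2_X 1 one_in) _ => //.
apply: self_reciprocal_of_set_roots (esym cardX) X0 Xinv (size_P2 n m lam) _ P2_X.
exact: coef_P2_lead.
Qed.

End ShiftedRootSets.

Lemma expr_card_mulr_closed (R : finIdomainType) (G : {set R}) g :
  0 \notin G -> {in G &, forall x y, x * y \in G} -> g \in G -> g ^+ #|G| = 1.
Proof.
move=> G0 mulG gG; have g_neq0 : g != 0 by apply: contraNneq G0 => <-.
have prodG_neq0 : \prod_(x in G) x != 0.
  by apply/prodf_neq0 => x xG; apply: contraNneq G0 => <-.
have gG_eq : [set g * x | x in G] = G.
  apply/eqP; rewrite eqEcard card_imset; last exact: mulfI.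
  by rewrite leqnn andbT; apply/subsetP => _ /imsetP [x xG ->]; apply: mulG.
apply: (mulIf prodG_neq0); rewrite mul1r -[in RHS]gG_eq big_imset /=.
  by rewrite big_split /= prodr_const.
by move=> x y _ _; apply: mulfI.
Qed.

Lemma natr_Fp_neq0 p i : prime p -> (0 < i < p)%N -> i%:R != 0 :> 'F_p.
Proof. by move=> p_pr /andP [i_gt0 i_lt_p]; rewrite -(dvdn_pcharf (pchar_Fp p_pr)) gtnNdvd. Qed.

Lemma card_Fstar p : prime p -> #|Fstar p| = p.-1.
Proof.
move=> p_pr; have -> : Fstar p = [set~ 0] by apply/setP => x; rewrite !inE.
by rewrite cardsC1 card_Fp.
Qed.

Lemma ratio_set_invr_closed p (A : {set 'F_p}) : invr_closed (ratio_set A).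
Proof.
by move=> _ /imset2P [a b aA bA ->]; rewrite invf_div; apply/imset2P; exists b a.
Qed.

Lemma mem1_ratio_set p (A : {set 'F_p}) : A \subset Fstar p -> ratio_set A != set0 ->
  1 \in ratio_set A.
Proof.
move=> A_sub /set0Pn [_ /imset2P [a _ aA _ _]]; apply/imset2P; exists a a => //.
by rewrite divff //; move/subsetP: A_sub => /(_ a aA); rewrite inE.
Qed.

Lemma card_dil_shift p (xi mu : 'F_p) (S : {set 'F_p}) : xi != 0 ->
  #|dil_shift xi mu S| = #|S|.
Proof. by move=> xi_neq0; rewrite card_imset // => a b /addIr /(mulfI xi_neq0). Qed.

Lemma dil_shift_U1 p (xi mu : 'F_p) (S : {set 'F_p}) :
  dil_shift xi mu (0 |: S) = mu |: dil_shift xi mu S.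
Proof. by rewrite /dil_shift imsetU1 mulr0 add0r. Qed.

Theorem theorem1p11 (p : nat) (G : {set 'F_p}) (xi mu : 'F_p) :
  prime p -> odd p ->
  is_mult_subgroup G -> G != Fstar p -> (3 <= #|G|)%N ->
  xi != 0 -> mu != 0 ->
  (forall A : {set 'F_p}, A \subset Fstar p ->
     ratio_set A != dil_shift xi mu G :\ 0) /\
  (forall A : {set 'F_p}, A \subset Fstar p ->
     ratio_set A != dil_shift xi mu (0 |: G) :\ 0).
Proof.
move=> p_pr _ [G_sub _ G_mul _] G_neq G_ge3 xi_neq0 mu_neq0.
have G0 : 0 \notin G by apply/negP => /(subsetP G_sub); rewrite inE eqxx.
have G_lt : (#|G|.+1 < p)%N.
  have := proper_card (A := G) (B := Fstar p).
  by rewrite properEneq G_neq G_sub card_Fstar // => /(_ isT); have := prime_gt1 p_pr; lia.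
have natr_neq0 i : (0 < i <= #|G|.+1)%N -> i%:R != 0 :> 'F_p.
  by case/andP => i_gt0 i_le; rewrite natr_Fp_neq0 // i_gt0 (leq_ltn_trans i_le G_lt).
have T_roots : {in dil_shift xi mu G, forall t, (t + - mu) ^+ #|G| = xi ^+ #|G|}.
  by move=> _ /imsetP [g gG ->]; rewrite addrK exprMn (expr_card_mulr_closed G0 G_mul gG) mulr1.
have card_T := card_dil_shift mu G xi_neq0.
have negmu_neq0 : - mu != 0 by rewrite oppr_eq0.
have lam_neq0 : xi ^+ #|G| != 0 by rewrite expf_neq0.
split=> A A_sub; apply/eqP => AA.
  apply: (shifted_roots_not_invr_closed G_ge3 natr_neq0 negmu_neq0 lam_neq0 card_T T_roots).
    by rewrite -AA mem1_ratio_set // AA (shifted_roots_D1_neq0 G_ge3 card_T).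
  by rewrite -AA; apply: ratio_set_invr_closed.
rewrite dil_shift_U1 -[mu in mu |: _]opprK in AA.
apply: (shifted_roots_U1_not_invr_closed G_ge3 natr_neq0 negmu_neq0 lam_neq0 card_T T_roots).
  rewrite -AA mem1_ratio_set // AA; apply/set0Pn; exists (- - mu).
  by rewrite !inE eqxx oppr_eq0 negmu_neq0.
by rewrite -AA; apply: ratio_set_invr_closed.
Qed.
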